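(* Let $\Bbbk$ be a field, $n\ge2$, $q\in\Bbbk$ a primitive $n$-th root of unity, $T_n(q)$ the Taft algebra and $A$ a unital associative $\Bbbk$-algebra. Let $\cdot:T_n(q)\otimes A\to A$ be a partial action with $g\cdot1_A=0$. Then: (i) $(x\cdot1_A)^n\in Z(A)$; (ii) $g^i\cdot(x\cdot1_A)=q^{-i}(g^i\cdot1_A)(x\cdot1_A)$ for all $0\le i\le n-1$; (iii) if there is $i\in\{2,\dots,n-1\}$ such that $g^i\cdot a=a$ for all $a\in A$, then $x\cdot1_A=0$.
   Context: The Taft algebra $T_n(q)$ is the Hopf algebra generated by $g,x$ with relations $g^n=1$, $x^n=0$, $xg=qgx$, $g$ group-like, $\Delta(x)=x\otimes1+g\otimes x$, $\varepsilon(x)=0$. $Z(A)$ is the center of $A$. A partial action of a bialgebra $H$ on $A$ is a linear map $\cdot:H\otimes A\to A$ with $1_H\cdot a=a$, $h\cdot(ab)=(h_1\cdot a)(h_2\cdot b)$, $h\cdot(k\cdot a)=(h_1\cdot1_A)(h_2k\cdot a)$. *)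

From HB Require Import structures.
From mathcomp Require Import all_boot all_order all_algebra.
Set Implicit Arguments. Unset Strict Implicit. Unset Printing Implicit Defensive.
Import Order.TTheory GRing.Theory Num.Theory.
Local Open Scope ring_scope.

(* The Taft algebra T_n(q) over a field k, as a k-vector space with basis
   g^i x^j (0 <= i, j < n): an element is its coefficient function
   (i, j) |-> coefficient of g^i x^j.  The tensor square T_n(q) (x) T_n(q)
   is represented by coefficient functions on pairs of basis indices. *)
Notation taft k n := {ffun 'I_n * 'I_n -> k^o}.
Notation taft2 k n := {ffun ('I_n * 'I_n) * ('I_n * 'I_n) -> k^o}.

Section Taft.
Variables (k : fieldType) (n : nat) (q : k).
Local Notation taft := (taft k n).
Local Notation taft2 := (taft2 k n).

(* the element g^i x^j, for arbitrary naturals i j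
   (using g^n = 1 and x^n = 0) *)
Definition taftGX (i j : nat) : taft :=
  [ffun w : 'I_n * 'I_n =>
     if (val w.1 == (i %% n)%N) && (val w.2 == j) then 1 else 0].

Definition taftE (u : 'I_n * 'I_n) : taft := taftGX u.1 u.2.

Definition taft_one : taft := taftGX 0 0.

(* multiplication: g^i x^j * g^k x^l = q^(j k) g^(i+k) x^(j+l),
   from x g = q g x *)
Definition taft_mul (h h' : taft) : taft :=
  \sum_(u : 'I_n * 'I_n) \sum_(v : 'I_n * 'I_n)
     (h u * h' v * q ^+ (u.2 * v.1)%N) *: taftGX (u.1 + v.1)%N (u.2 + v.2)%N.

Definition tens (h h' : taft) : taft2 := [ffun p => h p.1 * h' p.2].

Definition taft2_mul (T T' : taft2) : taft2 :=
  \sum_(p : ('I_n * 'I_n) * ('I_n * 'I_n))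
  \sum_(p' : ('I_n * 'I_n) * ('I_n * 'I_n))
     (T p * T' p') *: tens (taft_mul (taftE p.1) (taftE p'.1))
                           (taft_mul (taftE p.2) (taftE p'.2)).

Definition taft2_exp (T : taft2) (m : nat) : taft2 :=
  iter m (taft2_mul T) (tens taft_one taft_one).

Definition Delta_g : taft2 := tens (taftGX 1 0) (taftGX 1 0).
Definition Delta_x : taft2 :=
  tens (taftGX 0 1) taft_one + tens (taftGX 1 0) (taftGX 0 1).

(* Delta is an algebra map: Delta(g^i x^j) = Delta(g)^i Delta(x)^j,
   extended linearly *)
Definition taft_Delta (h : taft) : taft2 :=
  \sum_(u : 'I_n * 'I_n)
    h u *: taft2_mul (taft2_exp Delta_g u.1) (taft2_exp Delta_x u.2).

End Taft.

(* A partial action of T_n(q) on a k-algebra A, given as a map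
   act : T_n(q) -> A -> A that is bilinear (i.e. a linear map
   T_n(q) (x) A -> A), satisfying
   1_H . a = a,
   h . (a b) = (h_1 . a)(h_2 . b),
   h . (h' . a) = (h_1 . 1_A)(h_2 h' . a). *)
Definition partial_action (k : fieldType) (n : nat) (q : k) (A : algType k)
    (act : taft k n -> A -> A) : Prop :=
  [/\ (forall (c : k) (h h' : taft k n) (a : A),
          act (c *: h + h') a = c *: act h a + act h' a),
      (forall (c : k) (h : taft k n) (a b : A),
          act h (c *: a + b) = c *: act h a + act h b),
      (forall a : A, act (taft_one k n) a = a),
      (forall (h : taft k n) (a b : A),
          act h (a * b) =
          \sum_(p : ('I_n * 'I_n) * ('I_n * 'I_n))
             taft_Delta q h p *: (act (taftE k p.1) a * act (taftE k p.2) b))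
    & (forall (h h' : taft k n) (a : A),
          act h (act h' a) =
          \sum_(p : ('I_n * 'I_n) * ('I_n * 'I_n))
             taft_Delta q h p *:
               (act (taftE k p.1) 1 * act (taft_mul q (taftE k p.2) h') a))].

From HB Require Import structures.
From mathcomp Require Import all_boot all_order all_algebra.
Set Implicit Arguments. Unset Strict Implicit. Unset Printing Implicit Defensive.
Import Order.TTheory GRing.Theory Num.Theory.
Local Open Scope ring_scope.

(* Write e_i = g^i . 1 and y = x . 1.  Since g . 1 = 0 we get g^(n-1) . 1 = 0, and
   then the partial action axioms for g^(n-1) x give (g^(n-1) x) . a = a w with
   w = (g^(n-1) x) . 1 = - q y.  Expanding (g^(n-1) x) . ((g^(j+1) x^k) . a) in two
   ways yields the rule
     q^j (g^j x^(k+1)) . a = y ((g^j x^k) . a) - ((g^(j+1) x^k) . a) y.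
   Applying g^i to the rule at j = n - i, k = 0 gives (ii), and (iii) follows
   from (ii) because q^i <> 1.  Iterating the rule writes (x^k) . a as a
   combination of the y^i ((g^(k-i)) . a) y^(k-i) with the coefficients of
   prod_(i < k) (X - q^-i); for k = n this product is X^n - 1 and x^n = 0,
   whence y^n a = a y^n. *)

Lemma sumr_scale_delta (R : pzRingType) (T : finType) (V : lmodType R)
    (c : T) (F : T -> V) :
  \sum_(p : T) ((p == c)%:R : R) *: F p = F c.
Proof.
under eq_bigr => p _ do rewrite scaler_nat mulrb.
by rewrite -big_mkcond big_pred1_eq.
Qed.

Definition pow_roots_poly (R : nzRingType) (z : R) (k : nat) : {poly R} :=
  \prod_(0 <= i < k) ('X - (z ^+ i)%:P).

Lemma coef_pow_roots_polyS (R : nzRingType) (z : R) k i :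
  (pow_roots_poly z k.+1)`_i =
  (if i == 0%N then 0 else (pow_roots_poly z k)`_i.-1) - (pow_roots_poly z k)`_i * z ^+ k.
Proof. by rewrite /pow_roots_poly big_nat_recr //= mulrBr coefB coefMX coefMC. Qed.

Lemma coef_pow_roots_poly_eq0 (R : nzRingType) (z : R) k i :
  (k < i)%N -> (pow_roots_poly z k)`_i = 0.
Proof. by move=> ltki; rewrite nth_default // size_prod_XsubC size_iota subn0. Qed.

Section TaftBasis.
Variables (K : fieldType) (n : nat).
Local Notation N := n.+1.
Local Notation GX := (taftGX K N).

Definition gx_index (i j : nat) : 'I_N * 'I_N := (inord (i %% N), inord j).

Lemma taftGXE i j w : GX i j w = ((val w.1 == i %% N)%N && (val w.2 == j))%:R.
Proof. by rewrite ffunE; case: ifP. Qed.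

Lemma taftGX_index i j w : (j < N)%N -> GX i j w = (w == gx_index i j)%:R.
Proof.
move=> ltjN; case: w => a b.
by rewrite taftGXE /gx_index xpair_eqE -!val_eqE /= !inordK ?ltn_mod.
Qed.

Lemma taftGX_modn i i' j : (i = i' %[mod N])%N -> GX i j = GX i' j.
Proof. by move=> eqi; apply/ffunP => w; rewrite !ffunE eqi. Qed.

Lemma taftGX_eq0 i j : (N <= j)%N -> GX i j = 0.
Proof.
move=> leNj; apply/ffunP => w; rewrite !ffunE.
by rewrite [_ == j]ltn_eqF ?andbF // (leq_trans (ltn_ord _)).
Qed.

Lemma taftGX_N j : GX N j = GX 0 j.
Proof. by apply: taftGX_modn; rewrite modnn mod0n. Qed.

Lemma taftE_index i j : (j < N)%N -> taftE K (gx_index i j) = GX i j.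
Proof.
by move=> ltjN; rewrite /taftE /= !inordK ?ltn_mod //; apply: taftGX_modn; rewrite modn_mod.
Qed.

Lemma tensGXE i j i' j' p : (j < N)%N -> (j' < N)%N ->
  tens (GX i j) (GX i' j') p = (p == (gx_index i j, gx_index i' j'))%:R.
Proof.
move=> ltjN ltj'N; case: p => a b.
rewrite ffunE /= !taftGX_index // xpair_eqE.
by case: (a == _); case: (b == _); rewrite ?mulr1 ?mulr0.
Qed.

Lemma sum_tensGX (V : lmodType K^o) i j i' j' (F : taft K N -> taft K N -> V) :
  (j < N)%N -> (j' < N)%N ->
  \sum_(p : ('I_N * 'I_N) * ('I_N * 'I_N))
     tens (GX i j) (GX i' j') p *: F (taftE K p.1) (taftE K p.2) = F (GX i j) (GX i' j').
Proof.
move=> ltjN ltj'N; under eq_bigr => p _ do rewrite tensGXE //.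
by rewrite sumr_scale_delta /= !taftE_index.
Qed.

Lemma sum_taft2D (V : lmodType K^o) (T T' : taft2 K N) (F : _ -> V) :
  \sum_(p : ('I_N * 'I_N) * ('I_N * 'I_N)) (T + T') p *: F p =
  \sum_(p : ('I_N * 'I_N) * ('I_N * 'I_N)) T p *: F p +
  \sum_(p : ('I_N * 'I_N) * ('I_N * 'I_N)) T' p *: F p.
Proof. by rewrite -big_split; apply: eq_bigr => p _; rewrite ffunE scalerDl. Qed.

Variable q : K.
Hypothesis qN : q ^+ N = 1.

Lemma q_neq0 : q != 0.
Proof. by apply: contra_eq_neq qN => ->; rewrite expr0n eq_sym oner_neq0. Qed.

Lemma taft_mulGX i j i' j' :
  taft_mul q (GX i j) (GX i' j') = q ^+ (j * i') *: GX (i + i') (j + j').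
Proof.
have [ltjN|leNj] := ltnP j N; last first.
  rewrite taftGX_eq0 // (taftGX_eq0 _ (leq_trans leNj (leq_addr _ _))) scaler0.
  by rewrite /taft_mul big1 // => u _; rewrite big1 // => v _; rewrite ffunE !mul0r scale0r.
have [ltj'N|leNj'] := ltnP j' N; last first.
  rewrite (taftGX_eq0 i' leNj') (taftGX_eq0 _ (leq_trans leNj' (leq_addl _ _))) scaler0.
  rewrite /taft_mul big1 // => u _; rewrite big1 // => v _.
  by rewrite [(0 : taft K N) v]ffunE mulr0 mul0r scale0r.
rewrite /taft_mul.
under eq_bigr => u _ do under eq_bigr => v _ do rewrite !taftGX_index // -!scalerA.
under eq_bigr => u _ do rewrite -scaler_sumr.
rewrite !sumr_scale_delta /= !inordK ?ltn_mod // -(expr_mod _ qN) modnMmr (expr_mod _ qN).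
by congr (_ *: _); apply: taftGX_modn; rewrite modnDm.
Qed.

Lemma taft2_mul_tens i j i' j' k l k' l' :
  (j < N)%N -> (j' < N)%N -> (l < N)%N -> (l' < N)%N ->
  taft2_mul q (tens (GX i j) (GX i' j')) (tens (GX k l) (GX k' l')) =
  tens (taft_mul q (GX i j) (GX k l)) (taft_mul q (GX i' j') (GX k' l')).
Proof.
move=> *; rewrite /taft2_mul.
under eq_bigr => p _ do under eq_bigr => p' _ do rewrite !tensGXE // -scalerA.
under eq_bigr => p _ do rewrite -scaler_sumr.
by rewrite !sumr_scale_delta /= !taftE_index.
Qed.

Lemma taft2_mulDl (T T' S : taft2 K N) :
  taft2_mul q (T + T') S = taft2_mul q T S + taft2_mul q T' S.
Proof.
rewrite /taft2_mul -big_split; apply: eq_bigr => p _.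
by rewrite -big_split; apply: eq_bigr => p' _; rewrite ffunE mulrDl scalerDl.
Qed.

Lemma taft2_mulDr (T T' S : taft2 K N) :
  taft2_mul q S (T + T') = taft2_mul q S T + taft2_mul q S T'.
Proof.
rewrite /taft2_mul -big_split; apply: eq_bigr => p _.
by rewrite -big_split; apply: eq_bigr => p' _; rewrite ffunE mulrDr scalerDl.
Qed.

Lemma taft2_exp_Delta_g r : taft2_exp q (Delta_g K N) r = tens (GX r 0) (GX r 0).
Proof.
elim: r => [//|r IHr].
rewrite /taft2_exp iterS -/(taft2_exp q (Delta_g K N) r) IHr /Delta_g.
by rewrite taft2_mul_tens // !taft_mulGX !mul0n expr0 !scale1r add1n.
Qed.

Lemma taft_DeltaGX i j : (j < N)%N ->
  taft_Delta q (GX i j) =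
  taft2_mul q (taft2_exp q (Delta_g K N) (i %% N)) (taft2_exp q (Delta_x K N) j).
Proof.
move=> ltjN; rewrite /taft_Delta; under eq_bigr => u _ do rewrite taftGX_index //.
by rewrite sumr_scale_delta /= !inordK // ltn_mod.
Qed.

Lemma taft_Delta_g i : taft_Delta q (GX i 0) = tens (GX i 0) (GX i 0).
Proof.
rewrite taft_DeltaGX // taft2_exp_Delta_g /taft2_exp /= /taft_one taft2_mul_tens //.
rewrite !taft_mulGX !muln0 expr0 !scale1r !addn0.
by rewrite (@taftGX_modn (i %% N) i) // modn_mod.
Qed.

Hypothesis n_gt0 : (0 < n)%N.

Lemma taft2_exp_Delta_x1 : taft2_exp q (Delta_x K N) 1 = Delta_x K N.
Proof.
rewrite /taft2_exp /= /Delta_x /taft_one taft2_mulDl !taft2_mul_tens //.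
by rewrite !taft_mulGX !muln0 !expr0 !scale1r !addn0.
Qed.

Lemma taft_Delta_gx i :
  taft_Delta q (GX i 1) = tens (GX i 1) (GX i 0) + tens (GX i.+1 0) (GX i 1).
Proof.
rewrite taft_DeltaGX // taft2_exp_Delta_g taft2_exp_Delta_x1 /Delta_x /taft_one.
rewrite taft2_mulDr !taft2_mul_tens // !taft_mulGX !muln0 !expr0 !scale1r !addn0 !add0n.
rewrite !(@taftGX_modn (i %% N) i) ?modn_mod //.
by rewrite (@taftGX_modn (i %% N + 1) i.+1) // modnDml addn1.
Qed.

Section PartialAction.
Variables (A : algType K) (act : taft K N -> A -> A).
Hypothesis PA : partial_action q act.

Lemma act0l a : act 0 a = 0.
Proof.
have [linl _ _ _ _] := PA; have := linl 1 0 0 a; rewrite !scale1r addr0 => idem.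
by apply: (addrI (act 0 a)); rewrite addr0 -idem.
Qed.

Lemma actZl c h a : act (c *: h) a = c *: act h a.
Proof. by have [linl _ _ _ _] := PA; rewrite -[c *: h]addr0 linl act0l addr0. Qed.

Lemma act0r h : act h 0 = 0.
Proof.
have [_ linr _ _ _] := PA; have := linr 1 h 0 0; rewrite !scale1r addr0 => idem.
by apply: (addrI (act h 0)); rewrite addr0 -idem.
Qed.

Lemma actZr c h a : act h (c *: a) = c *: act h a.
Proof. by have [_ linr _ _ _] := PA; rewrite -[c *: a]addr0 linr act0r addr0. Qed.

Lemma actBr h a b : act h (a - b) = act h a - act h b.
Proof. by have [_ linr _ _ _] := PA; rewrite -scaleN1r addrC linr scaleN1r addrC. Qed.

Lemma act1 a : act (GX 0 0) a = a.
Proof. by case: PA. Qed.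

Lemma act_gM i a b : act (GX i 0) (a * b) = act (GX i 0) a * act (GX i 0) b.
Proof.
have [_ _ _ actM _] := PA.
by rewrite actM taft_Delta_g (@sum_tensGX A _ _ _ _ (fun h h' => act h a * act h' b)).
Qed.

Lemma act_gA i h a :
  act (GX i 0) (act h a) = act (GX i 0) 1 * act (taft_mul q (GX i 0) h) a.
Proof.
have [_ _ _ _ actA] := PA.
by rewrite actA taft_Delta_g
  (@sum_tensGX A _ _ _ _ (fun h1 h2 => act h1 1 * act (taft_mul q h2 h) a)).
Qed.

Lemma act_gxM i a b : act (GX i 1) (a * b) =
  act (GX i 1) a * act (GX i 0) b + act (GX i.+1 0) a * act (GX i 1) b.
Proof.
have [_ _ _ actM _] := PA; pose F h h' := act h a * act h' b.
by rewrite actM taft_Delta_gx sum_taft2D !(@sum_tensGX A _ _ _ _ F).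
Qed.

Lemma act_gxA i h a : act (GX i 1) (act h a) =
  act (GX i 1) 1 * act (taft_mul q (GX i 0) h) a +
  act (GX i.+1 0) 1 * act (taft_mul q (GX i 1) h) a.
Proof.
have [_ _ _ _ actA] := PA; pose F h1 h2 := act h1 1 * act (taft_mul q h2 h) a.
by rewrite actA taft_Delta_gx sum_taft2D !(@sum_tensGX A _ _ _ _ F).
Qed.

Section TrivialGroupLikePart.
Hypothesis g1_eq0 : act (GX 1 0) 1 = 0.

Local Notation e i := (act (GX i 0) 1).
Local Notation y := (act (GX 0 1) 1).
Local Notation w := (act (GX n 1) 1).

Lemma act_g_e i j : act (GX i 0) (e j) = e i * e (i + j).
Proof. by rewrite act_gA taft_mulGX mul0n expr0 scale1r add0n. Qed.

Lemma e_n_eq0 : e n = 0.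
Proof.
by have := act_g_e n 1; rewrite g1_eq0 act0r addn1 taftGX_N act1 mulr1.
Qed.

Lemma act_gnx a : act (GX n 1) a = a * w.
Proof. by have := act_gxM n a 1; rewrite !mulr1 e_n_eq0 mulr0 add0r taftGX_N act1. Qed.

Lemma act_gx_mulw j k a : act (GX j.+1 k) a * w =
  w * act (GX j k) a + q ^+ j.+1 *: act (GX j k.+1) a.
Proof.
have gnS l : GX (n + j.+1) l = GX j l.
  by apply: taftGX_modn; rewrite addnS -addSn modnDl.
have := act_gxA n (GX j.+1 k) a.
by rewrite act_gnx !taft_mulGX mul0n mul1n expr0 scale1r actZl taftGX_N act1 mul1r add1n !gnS.
Qed.

Lemma act_gnx1 : w = - (q *: y).
Proof.
have := act_gx_mulw 0 0 1; rewrite g1_eq0 mul0r act1 mulr1 expr1.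
by move/eqP; rewrite eq_sym addr_eq0 => /eqP.
Qed.

Lemma act_gxS j k a : q ^+ j *: act (GX j k.+1) a =
  y * act (GX j k) a - act (GX j.+1 k) a * y.
Proof.
apply: (scalerI q_neq0); rewrite scalerA -exprS scalerBr scalerAl scalerAr.
by have := act_gx_mulw j k a; rewrite act_gnx1 mulrN mulNr => ->; rewrite addNKr.
Qed.

Lemma act_g_y i : (i <= N)%N -> act (GX i 0) y = q ^- i *: (e i * y).
Proof.
(* apply g^i to [act_gxS] at g^(N - i), so that g^i g^(N - i) = 1 and g^i g^(N - i + 1) = g *)
move=> leiN; have := congr1 (act (GX i 0)) (act_gxS (N - i) 0 1).
rewrite actZr actBr !act_gM !act_g_e act_gA taft_mulGX mul0n expr0 scale1r add0n.
rewrite subnKC // [(i + _.+1)%N]addnS subnKC // !taftGX_N act1 mulr1.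
have -> : GX N.+1 0 = GX 1 0 by apply: taftGX_modn; rewrite -addn1 modnDl.
rewrite g1_eq0 mulr0 mul0r subr0.
have -> : act (GX i 0) y * e i = act (GX i 0) y by rewrite -act_gM mulr1.
by move=> <-; rewrite exprB ?qN ?div1r // unitfE q_neq0.
Qed.

(* Iterating [act_gxS], the coefficients of y^i (_) y^(k - i) obey the recursion
   [coef_pow_roots_polyS] of the coefficients of prod_(i < k) (X - q^-i). *)
Lemma act_gx_expand k j a :
  q ^+ (j * k) *: act (GX j k) a =
  \sum_(i < k.+1) (pow_roots_poly q^-1 k)`_i *:
     (y ^+ i * act (GX (j + (k - i)) 0) a * y ^+ (k - i)).
Proof.
elim: k j => [|k IHk] j.
  by rewrite big_ord1 /pow_roots_poly big_nil coef1 muln0 addn0 !expr0 !scale1r mul1r mulr1.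
have qjk : q ^+ (j * k) = q^-1 ^+ k * q ^+ (j.+1 * k).
  by rewrite mulSn exprD mulrA -exprMn mulVf ?q_neq0 // expr1n mul1r.
rewrite mulnSr exprD -scalerA act_gxS scalerBr scalerAr scalerAl IHk qjk -scalerA IHk.
under [in RHS]eq_bigr => i _ do rewrite coef_pow_roots_polyS scalerBl.
rewrite sumrB; congr (_ - _).
  rewrite [RHS]big_ord_recl /= scale0r add0r mulr_sumr; apply: eq_bigr => i _.
  by rewrite /bump /= subSS -scalerAr exprS !mulrA.
rewrite [RHS]big_ord_recr /= coef_pow_roots_poly_eq0 // mul0r scale0r addr0.
rewrite scaler_sumr mulr_suml; apply: eq_bigr => i _.
have leik : (i <= k)%N by rewrite -ltnS ltn_ord.
rewrite subSn // addnS -addSn exprSr !mulrA scalerA [_ ^+ k * _]mulrC.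
by rewrite -scalerAl.
Qed.

Section PrimitiveRoot.
Hypothesis q_prim : N.-primitive_root q.

Lemma y_expN_comm a : y ^+ N * a = a * y ^+ N.
Proof.
have qV_prim : N.-primitive_root q^-1.
  have -> : q^-1 = q ^+ n by apply: (mulIf q_neq0); rewrite mulVf ?q_neq0 // -exprSr qN.
  by rewrite prim_root_exp_coprime // coprimenS.
have := act_gx_expand N 0 a.
rewrite mul0n expr0 scale1r taftGX_eq0 // act0l /pow_roots_poly factor_Xn_sub_1 //.
under eq_bigr do rewrite coefB coefXn coef1 scalerBl.
rewrite sumrB big_ord_recr /= eqxx scale1r big1 => [|i _]; last first.
  by rewrite /= ltn_eqF ?ltn_ord // scale0r.
rewrite add0r big_ord_recl /= scale1r big1 => [|i _]; last by rewrite scale0r.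
rewrite addr0 subnn addn0 !expr0 mulr1 mul1r add0n taftGX_N !act1.
by move/esym/eqP; rewrite subr_eq0 => /eqP.
Qed.

Lemma y_eq0_of_act_g_id i : (2 <= i)%N -> (i < N)%N ->
  (forall a, act (GX i 0) a = a) -> y = 0.
Proof.
move=> le2i ltiN gi_id.
have := act_g_y (ltnW ltiN); rewrite !gi_id mul1r => /eqP.
rewrite -subr_eq0 -{1}[y]scale1r -scalerBl scaler_eq0 subr_eq0 eq_sym invr_eq1.
case/orP=> [qi1|/eqP //].
have : (N %| i)%N by rewrite (prim_order_dvd q_prim) qi1.
by move/(dvdn_leq (ltnW le2i)); rewrite leqNgt ltiN.
Qed.

End PrimitiveRoot.
End TrivialGroupLikePart.
End PartialAction.
End TaftBasis.

Theorem corollary3p4 (k : fieldType) (n : nat) (q : k) (A : algType k)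
    (act : taft k n -> A -> A) :
  (2 <= n)%N ->
  n.-primitive_root q ->
  partial_action q act ->
  act (taftGX k n 1 0) 1 = 0 ->
  [/\ (forall a : A,
         act (taftGX k n 0 1) 1 ^+ n * a = a * act (taftGX k n 0 1) 1 ^+ n),
      (forall i : nat, (i <= n - 1)%N ->
         act (taftGX k n i 0) (act (taftGX k n 0 1) 1) =
         q ^- i *: (act (taftGX k n i 0) 1 * act (taftGX k n 0 1) 1))
    & ((exists i : nat, [/\ (2 <= i)%N, (i <= n - 1)%N &
          forall a : A, act (taftGX k n i 0) a = a]) ->
       act (taftGX k n 0 1) 1 = 0)].
Proof.
case: n act => [|[|n]] act // _ q_prim PA g1_eq0.
have qN := prim_expr_order q_prim.
split=> [a | i lein | [i [le2i lein gi_id]]].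
- exact: (y_expN_comm qN _ PA g1_eq0 q_prim).
- exact: (act_g_y qN _ PA g1_eq0 (leq_trans lein (leq_subr 1 _))).
- exact: (y_eq0_of_act_g_id qN _ PA g1_eq0 q_prim le2i lein gi_id).
Qed.
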